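(* Let $(V_n)_{n\ge1}$ be a sequence in $\mathcal{V}$ with $\mathcal{L}_{V_n}(0)\to\infty$. The following are equivalent: (1) $(\mathcal{L}_{V_n})$ has a cutoff; (2) for all $\epsilon>0$ and $c>0$, $T_{V_n}(\epsilon)\lambda_{V_n}(c)\to\infty$; (3) there is $\epsilon>0$ such that $T_{V_n}(\epsilon)\lambda_{V_n}(c)\to\infty$ for all $c>0$; (4) for all $c>0$, $\tau_{V_n}(c)\lambda_{V_n}(c)\to\infty$; (5) for all $\tilde c>0$ and $c>0$, $\tau_{V_n}(\tilde c)\lambda_{V_n}(c)\to\infty$; (6) there is $\tilde c>0$ such that $\tau_{V_n}(\tilde c)\lambda_{V_n}(c)\to\infty$ for all $c>0$. Moreover, if $(\mathcal{L}_{V_n})$ has a cutoff, then $\tau_{V_n}(c)$ is a cutoff time for every $c>0$, and \[ |T_{V_n}(\epsilon)-T_{V_n}(\delta)|=O(1/\lambda_{V_n}(c))\quad\forall\epsilon,\delta,c\in(0,\infty), \] \[ |T_{V_n}(\epsilon)-\tau_{V_n}(c)|=O\Big(\sqrt{\tau_{V_n}(c)/\lambda_{V_n}(c)}\Big)\quad\forall\epsilon,c\in(0,\infty). \]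
   Context: $\mathcal{V}$ is the class of non-decreasing right-continuous $V:(0,\infty)\to\mathbb{R}$ with $\lim_{\lambda\to0^+}V(\lambda)=0$, $\lim_{\lambda\to\infty}V(\lambda)<\infty$; $\mathcal{L}_V(t)=\int_{(0,\infty)}e^{-t\lambda}dV(\lambda)$ for $t\ge0$. Mixing time: $T_V(\epsilon)=\min\{t\ge0:\mathcal{L}_V(t)\le\epsilon\}$. For $c\in(0,\mathcal{L}_V(0))$: $\lambda_V(c)=\inf\{\lambda:V(\lambda)>c\}$ and $\tau_V(c)=\sup_{\lambda\ge\lambda_V(c)}\frac{\log(1+V(\lambda))}{\lambda}$ (these are defined for all large $n$ since $\mathcal{L}_{V_n}(0)\to\infty$). Cutoff: with $M=\limsup_n\mathcal{L}_{V_n}(0)$, there exist $t_n>0$ with $\mathcal{L}_{V_n}(at_n)\to0$ for all $a>1$ and $\mathcal{L}_{V_n}(at_n)\to M$ for all $a\in(0,1)$; $t_n$ is then a cutoff time. For positive sequences, $a_n=O(b_n)$ means $\sup_n a_n/b_n<\infty$. *)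

From Stdlib Require Import Reals Lra Classical ClassicalEpsilon.
Open Scope R_scope.

(* The class 𝒱: V : (0,∞) -> R (values at λ <= 0 are irrelevant). *)
Definition inV (V : R -> R) : Prop :=
  (forall x y, 0 < x -> x <= y -> V x <= V y) /\
  (forall x, 0 < x -> forall eps, 0 < eps ->
     exists d, 0 < d /\ forall y, x <= y < x + d -> Rabs (V y - V x) < eps) /\
  (forall eps, 0 < eps -> exists d, 0 < d /\
     forall y, 0 < y < d -> Rabs (V y) < eps) /\
  (exists l, forall eps, 0 < eps -> exists N, forall y, N < y -> Rabs (V y - l) < eps).

(* Lower Stieltjes sum of λ ↦ e^{-tλ} against dV over the partition
   (0, x 0] , (x 0, x 1], ..., (x (k-1), x k]  (with V(0+) = 0). *)
Fixpoint lsum (V : R -> R) (t : R) (x : nat -> R) (k : nat) : R :=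
  match k with
  | O => exp (- t * x O) * V (x O)
  | S k' => lsum V t x k' + exp (- t * x k) * (V (x k) - V (x k'))
  end.

Definition partition (x : nat -> R) (k : nat) : Prop :=
  0 < x O /\ forall i, (i < k)%nat -> x i < x (S i).

Definition LapSums (V : R -> R) (t : R) (s : R) : Prop :=
  exists x k, partition x k /\ s = lsum V t x k.

(* L_V(t) = ∫_{(0,∞)} e^{-tλ} dV(λ), as the supremum of lower sums
   (the integrand is decreasing, so e^{-t x_{i+1}} is its infimum on (x_i,x_{i+1}]). *)
Definition Lap (V : R -> R) (t : R) : R :=
  epsilon (inhabits 0) (fun l => is_lub (LapSums V t) l).

Definition is_glb (E : R -> Prop) (l : R) : Prop :=
  (forall x, E x -> l <= x) /\ (forall b, (forall x, E x -> b <= x) -> b <= l).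

Definition Tmix (V : R -> R) (eps : R) : R :=
  epsilon (inhabits 0) (fun t => 0 <= t /\ Lap V t <= eps /\
     forall s, 0 <= s -> Lap V s <= eps -> t <= s).

Definition lamV (V : R -> R) (c : R) : R :=
  epsilon (inhabits 0) (is_glb (fun l => 0 < l /\ V l > c)).

Definition tauV (V : R -> R) (c : R) : R :=
  epsilon (inhabits 0)
    (is_lub (fun s => exists l, lamV V c <= l /\ 0 < l /\ s = ln (1 + V l) / l)).

(* Cutoff time, specialised to the standing case L_{V_n}(0) -> ∞ (so M = ∞). *)
Definition is_cutoff_time (V : nat -> R -> R) (t : nat -> R) : Prop :=
  (exists N, forall n, (N <= n)%nat -> 0 < t n) /\
  (forall a, 1 < a -> Un_cv (fun n => Lap (V n) (a * t n)) 0) /\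
  (forall a, 0 < a < 1 -> cv_infty (fun n => Lap (V n) (a * t n))).

Definition has_cutoff (V : nat -> R -> R) : Prop :=
  exists t, is_cutoff_time V t.

Definition bigO (a b : nat -> R) : Prop :=
  exists C N, forall n, (N <= n)%nat -> Rabs (a n) <= C * b n.

(* Two scales of V govern everything.  Below lambda = lamV V c the measure dV has
   mass at most c; from lambda on, V y <= e^{tau y} - 1 with tau = tauV V c, with
   near-equality at some y >= lambda.  Summing by parts against e^{-t y} gives
   L_V(t) <= c + c e^{-t lambda'} + (m + 1) e^{-(t - tau) lambda} whenever
   t <= m (t - tau) (with lambda' the scale of a smaller level), while the
   near-extremal y gives L_V(t) >= (tau - eta - t) lambda.  So L_V falls from large
   to small within O(1/lambda) of T_V(eps) and within O(sqrt(tau/lambda)) of tau, and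
   each of the six conditions amounts to tau lambda -> oo, i.e. to a cutoff at tau. *)

From Stdlib Require Import Reals Lra Lia ZArith Classical ClassicalEpsilon.
Open Scope R_scope.

Lemma exp_le x y : x <= y -> exp x <= exp y.
Proof. intros [H|H]; [left; apply exp_increasing; auto | subst; lra]. Qed.

Lemma exp_le_1 x : x <= 0 -> exp x <= 1.
Proof. intros H; rewrite <- exp_0; apply exp_le; lra. Qed.

Lemma ln_le x y : 0 < x -> x <= y -> ln x <= ln y.
Proof. intros Hx [H|H]; [left; apply ln_increasing; auto | subst; lra]. Qed.

Lemma mul_exp_neg_lt K d y : 0 <= K -> 0 < d -> K / d <= y -> K * exp (- y) < d.
Proof.
  intros HK Hd Hy. rewrite exp_Ropp. pose proof (exp_ineq1_le y). pose proof (exp_pos y).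
  assert (K <= d * y).
  { replace K with (d * (K / d)) by (field; lra). apply Rmult_le_compat_l; lra. }
  apply Rmult_lt_reg_r with (exp y); auto. rewrite Rmult_assoc, Rinv_l; nra.
Qed.

(* [e^x >= (1 + x/2)^2] absorbs the linear factor. *)
Lemma lin_mul_exp_neg_lt x d : 0 <= x -> 0 < d -> 6 / d <= x -> (x + 3) * exp (- x) < d.
Proof.
  intros Hx Hd Hxd.
  assert (Hq : (1 + x / 2) * (1 + x / 2) <= exp x).
  { replace x with (x / 2 + x / 2) at 3 by field. rewrite exp_plus.
    pose proof (exp_ineq1_le (x / 2)). apply Rmult_le_compat; lra. }
  rewrite exp_Ropp. pose proof (exp_pos x).
  apply Rmult_lt_reg_r with (exp x); auto. rewrite Rmult_assoc, Rinv_l; [|lra].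
  assert (6 <= d * x) by (replace 6 with (d * (6 / d)) by (field; lra); apply Rmult_le_compat_l; lra).
  assert (d * ((1 + x / 2) * (1 + x / 2)) <= d * exp x) by (apply Rmult_le_compat_l; lra).
  nra.
Qed.

Lemma one_sub_exp_le_mul m u : 0 <= u -> 1 - exp (- INR m * u) <= INR m * (1 - exp (- u)).
Proof.
  intros Hu. induction m as [|m IH].
  - simpl. replace (- 0 * u) with 0 by ring. rewrite exp_0. lra.
  - rewrite S_INR. replace (- (INR m + 1) * u) with (- INR m * u + - u) by ring.
    rewrite exp_plus.
    assert (exp (- INR m * u) <= 1) by (apply exp_le_1; pose proof (pos_INR m); nra).
    assert (exp (- u) <= 1) by (apply exp_le_1; lra).
    pose proof (exp_pos (- INR m * u)). nra.
Qed.

Lemma exp_increment_le t tau m y y' : 0 <= t -> (1 <= m)%nat -> t <= INR m * (t - tau) ->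
  y <= y' ->
  exp (tau * y) * (exp (- t * y) - exp (- t * y'))
  <= INR m * (exp (- (t - tau) * y) - exp (- (t - tau) * y')).
Proof.
  intros Ht Hm Htm Hy.
  assert (HmR : 1 <= INR m) by (apply (le_INR 1 m) in Hm; simpl in Hm; lra).
  assert (Htt : 0 <= t - tau) by nra.
  set (d := y' - y).
  assert (Hd : 0 <= d) by (unfold d; lra).
  assert (E1 : exp (tau * y) * (exp (- t * y) - exp (- t * y'))
               = exp (- (t - tau) * y) * (1 - exp (- t * d))).
  { unfold d. rewrite Rmult_minus_distr_l, Rmult_minus_distr_l, Rmult_1_r, <- !exp_plus.
    f_equal; f_equal; ring. }
  assert (E2 : INR m * (exp (- (t - tau) * y) - exp (- (t - tau) * y'))
               = exp (- (t - tau) * y) * (INR m * (1 - exp (- ((t - tau) * d))))).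
  { unfold d. replace (- (t - tau) * y') with (- (t - tau) * y + - ((t - tau) * (y' - y))) by ring.
    rewrite exp_plus. ring. }
  rewrite E1, E2. apply Rmult_le_compat_l; [left; apply exp_pos|].
  pose proof (one_sub_exp_le_mul m ((t - tau) * d) (Rmult_le_pos _ _ Htt Hd)).
  assert (exp (- INR m * ((t - tau) * d)) <= exp (- t * d)) by (apply exp_le; nra).
  lra.
Qed.

Lemma nat_between r : 0 <= r -> exists m : nat, (1 <= m)%nat /\ r <= INR m <= r + 1.
Proof.
  intros Hr. destruct (archimed r) as [H1 H2].
  assert (Hz : (0 <= up r)%Z) by (apply le_IZR; lra).
  exists (Z.to_nat (up r)). rewrite INR_IZR_INZ, Z2Nat.id; auto.
  split; [|lra].
  destruct (Z.to_nat (up r)) eqn:E; [|lia].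
  exfalso. assert (up r = 0%Z) by lia. rewrite H in H1. simpl in H1. lra.
Qed.

Lemma glb_exists (E : R -> Prop) :
  (exists x, E x) -> (forall x, E x -> 0 <= x) -> exists m, is_glb E m.
Proof.
  intros [x0 Hx0] Hlb.
  destruct (completeness (fun y => E (- y))) as [m [Hm1 Hm2]].
  - exists 0. intros y Hy. specialize (Hlb _ Hy). lra.
  - exists (- x0). rewrite Ropp_involutive; auto.
  - exists (- m). split.
    + intros x Hx. assert (- x <= m) by (apply Hm1; rewrite Ropp_involutive; auto). lra.
    + intros b Hb. assert (m <= - b).
      { apply Hm2. intros y Hy. specialize (Hb _ Hy). lra. }
      lra.
Qed.

Lemma sqrt_div_mul tau lam : 0 <= tau -> 0 < lam ->
  sqrt (tau / lam) * lam = sqrt (tau * lam) /\ tau = sqrt (tau * lam) * sqrt (tau / lam).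
Proof.
  intros Ht Hl.
  assert (Hq : 0 <= tau / lam) by (apply Rmult_le_pos; [lra | left; apply Rinv_0_lt_compat; lra]).
  split.
  - replace (tau * lam) with (tau / lam * (lam * lam)) by (field; lra).
    rewrite sqrt_mult, sqrt_square; nra.
  - rewrite <- sqrt_mult by nra.
    replace (tau * lam * (tau / lam)) with (tau * tau) by (field; lra).
    rewrite sqrt_square; lra.
Qed.

(** * The class V and weighted lower sums *)

Section ClassV.
Variable V : R -> R.
Hypothesis hV : inV V.

Lemma V_mono x y : 0 < x -> x <= y -> V x <= V y.
Proof. apply (proj1 hV). Qed.

Lemma V_small_near_0 eps : 0 < eps -> exists d, 0 < d /\ forall y, 0 < y < d -> V y < eps.
Proof.
  intros He. destruct hV as [_ [_ [H0 _]]]. destruct (H0 eps He) as [d [Hd H]].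
  exists d; split; auto. intros y Hy. specialize (H y Hy). apply Rabs_def2 in H. lra.
Qed.

Lemma V_nonneg y : 0 < y -> 0 <= V y.
Proof.
  intros Hy. apply Rnot_lt_le; intro Hneg. destruct hV as [_ [_ [H0 _]]].
  destruct (H0 (- V y)) as [d [Hd Hsmall]]; [lra|].
  set (z := Rmin (y / 2) (d / 2)).
  assert (Hz : 0 < z) by (apply Rmin_pos; lra).
  assert (z <= y / 2 /\ z <= d / 2) as [Hzy Hzd] by (split; [apply Rmin_l | apply Rmin_r]).
  pose proof (Hsmall z ltac:(lra)) as Hzs. apply Rabs_def2 in Hzs.
  pose proof (V_mono z y Hz ltac:(lra)). lra.
Qed.

Lemma V_bounded : exists l, forall y, 0 < y -> V y <= l.
Proof.
  destruct hV as [_ [_ [_ [l Hl]]]]. exists l.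
  intros y Hy. apply Rnot_lt_le; intro H.
  destruct (Hl (V y - l)) as [N HN]; [lra|].
  set (z := Rmax y (N + 1)).
  assert (y <= z /\ N + 1 <= z) as [Hyz HNz] by (split; [apply Rmax_l | apply Rmax_r]).
  specialize (HN z ltac:(lra)). apply Rabs_def2 in HN. pose proof (V_mono y z Hy Hyz). lra.
Qed.

Lemma V_right_cont x eps : 0 < x -> 0 < eps ->
  exists d, 0 < d /\ forall y, x <= y < x + d -> V y < V x + eps.
Proof.
  intros Hx He. destruct hV as [_ [H _]]. destruct (H x Hx eps He) as [d [Hd H']].
  exists d; split; auto. intros y Hy. specialize (H' y Hy). apply Rabs_def2 in H'. lra.
Qed.
End ClassV.

Lemma partition_S x k : partition x (S k) -> partition x k.
Proof. intros [H0 H]; split; auto. Qed.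

Lemma partition_lt x k : partition x (S k) -> x k < x (S k).
Proof. intros [_ H]; apply H; lia. Qed.

Lemma partition_le x k : partition x k -> forall i, (i <= k)%nat -> x i <= x k.
Proof.
  intros Hp. induction k as [|k IH]; intros i Hi.
  - replace i with 0%nat by lia; lra.
  - destruct (Nat.eq_dec i (S k)) as [->|Hne]; [lra|].
    pose proof (partition_lt x k Hp). pose proof (IH (partition_S _ _ Hp) i ltac:(lia)). lra.
Qed.

Lemma partition_pos x k : partition x k -> forall i, (i <= k)%nat -> 0 < x i.
Proof.
  intros Hp i Hi. induction i as [|i IH]; [apply (proj1 Hp)|].
  pose proof (IH ltac:(lia)). assert (x i < x (S i)) by (apply (proj2 Hp); lia). lra.
Qed.

Fixpoint wsum (V : R -> R) (g : R -> R) (x : nat -> R) (k : nat) : R :=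
  match k with
  | O => g (x O) * V (x O)
  | S k' => wsum V g x k' + g (x k) * (V (x k) - V (x k'))
  end.

Lemma lsum_wsum V t x k : lsum V t x k = wsum V (fun y => exp (- t * y)) x k.
Proof. induction k as [|k IH]; simpl; [reflexivity | rewrite IH; reflexivity]. Qed.

Lemma wsum_add V g h x k :
  wsum V (fun y => g y + h y) x k = wsum V g x k + wsum V h x k.
Proof. induction k as [|k IH]; simpl; [ring | rewrite IH; ring]. Qed.

Lemma wsum_scale V c g x k : wsum V (fun y => c * g y) x k = c * wsum V g x k.
Proof. induction k as [|k IH]; simpl; [ring | rewrite IH; ring]. Qed.

Definition below (a y : R) : R := if Rlt_dec y a then 1 else 0.

Lemma below_lt a y : y < a -> below a y = 1.
Proof. intros H; unfold below; destruct (Rlt_dec y a); lra. Qed.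

Lemma below_ge a y : a <= y -> below a y = 0.
Proof. intros H; unfold below; destruct (Rlt_dec y a); lra. Qed.

Lemma below_range a y : 0 <= below a y <= 1.
Proof. unfold below; destruct (Rlt_dec y a); lra. Qed.

Section WeightedSums.
Variable V : R -> R.
Hypothesis hV : inV V.

Lemma V_increment_nonneg x k : partition x (S k) -> 0 <= V (x (S k)) - V (x k).
Proof.
  intros Hp. pose proof (partition_pos x (S k) Hp k ltac:(lia)).
  pose proof (partition_lt x k Hp). pose proof (V_mono V hV (x k) (x (S k)) ltac:(lra) ltac:(lra)).
  lra.
Qed.

Lemma wsum_le_compat g h x k : partition x k ->
  (forall i, (i <= k)%nat -> g (x i) <= h (x i)) -> wsum V g x k <= wsum V h x k.
Proof.
  induction k as [|k IH]; intros Hp Hgh; simpl.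
  - pose proof (V_nonneg V hV _ (proj1 Hp)). pose proof (Hgh 0%nat (le_n 0)). nra.
  - pose proof (IH (partition_S _ _ Hp) ltac:(intros i Hi; apply Hgh; lia)).
    pose proof (V_increment_nonneg x k Hp). pose proof (Hgh (S k) (le_n _)). nra.
Qed.

Lemma wsum_le_split g h1 h2 x k : partition x k ->
  (forall y, 0 < y -> g y <= h1 y + h2 y) -> wsum V g x k <= wsum V h1 x k + wsum V h2 x k.
Proof.
  intros Hp H. rewrite <- wsum_add. apply wsum_le_compat; auto.
  intros i Hi. apply H, (partition_pos x k Hp); auto.
Qed.

Lemma wsum_below_le a B x k : partition x k -> 0 <= B ->
  (forall y, 0 < y < a -> V y <= B) -> wsum V (below a) x k <= B.
Proof.
  intros Hp HB HVB.
  enough (H : (x k < a -> wsum V (below a) x k <= V (x k)) /\ wsum V (below a) x k <= B)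
    by apply H.
  induction k as [|k IH]; simpl.
  - pose proof (proj1 Hp). pose proof (V_nonneg V hV _ (proj1 Hp)).
    destruct (Rlt_dec (x 0%nat) a) as [Hlt|Hge].
    + rewrite below_lt by auto. pose proof (HVB (x 0%nat) ltac:(lra)). lra.
    + rewrite below_ge by lra. lra.
  - destruct (IH (partition_S _ _ Hp)) as [IH1 IH2].
    pose proof (partition_lt x k Hp).
    pose proof (partition_pos x (S k) Hp (S k) (le_n _)).
    destruct (Rlt_dec (x (S k)) a) as [Hlt|Hge].
    + rewrite below_lt by auto. pose proof (IH1 ltac:(lra)).
      pose proof (HVB (x (S k)) ltac:(lra)). lra.
    + rewrite below_ge by lra. lra.
Qed.

Lemma wsum_head_le t a' a B' B x k : partition x k -> 0 <= t -> 0 < a' -> a' <= a -> 0 <= B' ->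
  (forall y, 0 < y < a' -> V y <= B') -> (forall y, 0 < y < a -> V y <= B) ->
  wsum V (fun y => below a y * exp (- t * y)) x k <= B' + exp (- t * a') * B.
Proof.
  intros Hp Ht Ha' Haa HB' HVB' HVB.
  assert (HB : 0 <= B) by (pose proof (V_nonneg V hV (a' / 2)); pose proof (HVB (a' / 2)); lra).
  eapply Rle_trans.
  { apply (wsum_le_split _ (below a') (fun y => exp (- t * a') * below a y)); auto.
    intros y Hy. pose proof (below_range a y). pose proof (exp_pos (- t * a')).
    destruct (Rlt_dec y a') as [Hlt|Hge].
    - rewrite (below_lt a' y Hlt). pose proof (exp_le_1 (- t * y) ltac:(nra)). nra.
    - rewrite (below_ge a' y) by lra. pose proof (exp_le (- t * y) (- t * a') ltac:(nra)). nra. }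
  rewrite wsum_scale.
  pose proof (wsum_below_le a' B' x k Hp HB' HVB').
  pose proof (wsum_below_le a B x k Hp HB HVB).
  pose proof (exp_pos (- t * a')). nra.
Qed.

Lemma wsum_tail_below a t x k : partition x k -> x k < a ->
  wsum V (fun y => (1 - below a y) * exp (- t * y)) x k = 0.
Proof.
  induction k as [|k IH]; intros Hp Hk; simpl; rewrite below_lt by auto; [ring|].
  rewrite IH by (auto using partition_S; pose proof (partition_lt x k Hp); lra). ring.
Qed.

(* Summation by parts: the increments of [V] beyond [a] are paid for by the
   telescoping sum of [m e^{-(t - tau) y}]. *)
Lemma wsum_tail_telescope t tau m a x k : partition x k -> 0 <= t -> (1 <= m)%nat ->
  t <= INR m * (t - tau) -> (forall y, a <= y -> V y <= exp (tau * y)) -> a <= x k ->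
  wsum V (fun y => (1 - below a y) * exp (- t * y)) x k
  <= exp (- t * x k) * V (x k) + INR m * (exp (- (t - tau) * a) - exp (- (t - tau) * x k)).
Proof.
  intros Hp Ht Hm Htm HVe.
  assert (HmR : 1 <= INR m) by (apply (le_INR 1 m) in Hm; simpl in Hm; lra).
  assert (HGa : forall y, a <= y -> exp (- (t - tau) * y) <= exp (- (t - tau) * a))
    by (intros; apply exp_le; nra).
  revert Hp. induction k as [|k IH]; intros Hp Hk; simpl; rewrite below_ge by lra.
  - pose proof (HGa _ Hk). nra.
  - pose proof (partition_lt x k Hp) as Hxx.
    pose proof (partition_pos x (S k) Hp k ltac:(lia)) as Hxk.
    pose proof (V_increment_nonneg x k Hp).
    pose proof (V_nonneg V hV _ Hxk).
    pose proof (HGa _ Hk).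
    destruct (Rlt_dec (x k) a) as [Hlt|Hge].
    + rewrite (wsum_tail_below a t x k (partition_S _ _ Hp) Hlt).
      pose proof (exp_pos (- t * x (S k))). nra.
    + pose proof (IH (partition_S _ _ Hp) (Rnot_lt_le _ _ Hge)).
      pose proof (exp_increment_le t tau m (x k) (x (S k)) Ht Hm Htm ltac:(lra)).
      pose proof (HVe (x k) (Rnot_lt_le _ _ Hge)).
      pose proof (exp_le (- t * x (S k)) (- t * x k) ltac:(nra)).
      nra.
Qed.

Lemma wsum_tail_le t tau m a x k : partition x k -> 0 <= t -> (1 <= m)%nat ->
  t <= INR m * (t - tau) -> (forall y, a <= y -> V y <= exp (tau * y)) ->
  wsum V (fun y => (1 - below a y) * exp (- t * y)) x k <= (INR m + 1) * exp (- (t - tau) * a).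
Proof.
  intros Hp Ht Hm Htm HVe.
  assert (HmR : 1 <= INR m) by (apply (le_INR 1 m) in Hm; simpl in Hm; lra).
  pose proof (exp_pos (- (t - tau) * a)).
  destruct (Rlt_dec (x k) a) as [Hlt|Hge].
  - rewrite wsum_tail_below by auto. nra.
  - pose proof (wsum_tail_telescope t tau m a x k Hp Ht Hm Htm HVe (Rnot_lt_le _ _ Hge)).
    pose proof (partition_pos x k Hp k (le_n _)) as Hxk.
    assert (exp (- t * x k) * V (x k) <= exp (- (t - tau) * x k)).
    { apply Rle_trans with (exp (- t * x k) * exp (tau * x k)).
      - apply Rmult_le_compat_l; [left; apply exp_pos | apply HVe; lra].
      - rewrite <- exp_plus; right; f_equal; ring. }
    pose proof (exp_pos (- (t - tau) * x k)). nra.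
Qed.
End WeightedSums.

Lemma wsum_one V x k : wsum V (fun _ => 1) x k = V (x k).
Proof. induction k as [|k IH]; simpl; [ring | rewrite IH; ring]. Qed.

(** * The Laplace transform *)

Section Laplace.
Variable V : R -> R.
Hypothesis hV : inV V.

Lemma lsum_le_V t x k : 0 <= t -> partition x k -> lsum V t x k <= V (x k).
Proof.
  intros Ht Hp. rewrite lsum_wsum, <- wsum_one. apply wsum_le_compat; auto.
  intros i Hi. pose proof (partition_pos x k Hp i Hi). apply exp_le_1; nra.
Qed.

Lemma Lap_lub t : 0 <= t -> is_lub (LapSums V t) (Lap V t).
Proof.
  intros Ht. unfold Lap. apply epsilon_spec.
  destruct (V_bounded V hV) as [l Hl].
  destruct (completeness (LapSums V t)) as [m Hm]; [| |exists m; exact Hm].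
  - exists l. intros s [x [k [Hp ->]]].
    apply Rle_trans with (V (x k)); [apply lsum_le_V; auto|].
    apply Hl, (partition_pos x k Hp); lia.
  - exists (lsum V t (fun _ => 1) 0), (fun _ => 1), 0%nat. split; auto.
    split; [lra | intros; lia].
Qed.

Lemma Lap_ge_lsum t x k : 0 <= t -> partition x k -> lsum V t x k <= Lap V t.
Proof. intros Ht Hp. apply (proj1 (Lap_lub t Ht)). exists x, k; auto. Qed.

Lemma Lap_le t M : 0 <= t -> (forall x k, partition x k -> lsum V t x k <= M) -> Lap V t <= M.
Proof. intros Ht H. apply (proj2 (Lap_lub t Ht)). intros s [x [k [Hp ->]]]. auto. Qed.

Lemma Lap_ge_point t y : 0 <= t -> 0 < y -> exp (- t * y) * V y <= Lap V t.
Proof.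
  intros Ht Hy. change (exp (- t * y) * V y) with (lsum V t (fun _ => y) 0).
  apply Lap_ge_lsum; auto. split; [lra | intros; lia].
Qed.

Lemma Lap_nonneg t : 0 <= t -> 0 <= Lap V t.
Proof.
  intros Ht. pose proof (Lap_ge_point t 1 Ht Rlt_0_1). pose proof (V_nonneg V hV 1 Rlt_0_1).
  pose proof (exp_pos (- t * 1)). nra.
Qed.

Lemma Lap_anti t1 t2 : 0 <= t1 -> t1 <= t2 -> Lap V t2 <= Lap V t1.
Proof.
  intros H1 H2. apply Lap_le; [lra|]. intros x k Hp.
  apply Rle_trans with (lsum V t1 x k); [|apply Lap_ge_lsum; auto].
  rewrite !lsum_wsum. apply wsum_le_compat; auto.
  intros i Hi. pose proof (partition_pos x k Hp i Hi). apply exp_le; nra.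
Qed.

Lemma Lap_le_of_V_le l : (forall y, 0 < y -> V y <= l) -> forall t, 0 <= t -> Lap V t <= l.
Proof.
  intros Hl t Ht. apply Lap_le; auto. intros x k Hp.
  apply Rle_trans with (V (x k)); [apply lsum_le_V; auto|].
  apply Hl, (partition_pos x k Hp); lia.
Qed.

Definition exceeds (c : R) : Prop := exists y, 0 < y /\ c < V y.

Lemma exceeds_of_lt_Lap0 c : c < Lap V 0 -> exceeds c.
Proof.
  intros H. apply NNPP; intro Hn.
  enough (Lap V 0 <= c) by lra.
  apply Lap_le_of_V_le; [|lra]. intros y Hy.
  apply Rnot_lt_le; intro Hc. apply Hn. exists y; auto.
Qed.

Lemma lsum_shift_ge t h x k : 0 <= h -> partition x k ->
  exp (- h * x k) * lsum V t x k <= lsum V (t + h) x k.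
Proof.
  intros Hh Hp. rewrite !lsum_wsum, <- wsum_scale. apply wsum_le_compat; auto.
  intros i Hi. rewrite <- exp_plus. apply exp_le.
  pose proof (partition_le x k Hp i Hi). nra.
Qed.

Lemma Lap_le_of_forall_gt t eps : 0 <= t -> 0 <= eps ->
  (forall s, t < s -> Lap V s <= eps) -> Lap V t <= eps.
Proof.
  intros Ht He H. apply Lap_le; auto. intros x k Hp. apply Rnot_lt_le; intro HL.
  set (L := lsum V t x k) in *. set (X := x k).
  assert (HX : 0 < X) by (apply (partition_pos x k Hp); lia).
  set (h := (L - eps) / (2 * L * X)).
  assert (Hh : 0 < h) by (apply Rdiv_lt_0_compat; [lra | apply Rmult_lt_0_compat; lra]).
  assert (Hhx : h * X = (L - eps) / (2 * L)) by (unfold h; field; split; lra).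
  pose proof (lsum_shift_ge t h x k (Rlt_le _ _ Hh) Hp) as Hsh. fold L X in Hsh.
  pose proof (Lap_ge_lsum (t + h) x k ltac:(lra) Hp).
  pose proof (H (t + h) ltac:(lra)).
  pose proof (exp_ineq1_le (- h * X)).
  assert ((1 - h * X) * L = (L + eps) / 2) by (rewrite Hhx; field; lra).
  nra.
Qed.

Lemma Lap_shift_le t s a' a B' B :
  0 <= t -> 0 <= s -> 0 < a' -> a' <= a -> 0 <= B' ->
  (forall y, 0 < y < a' -> V y <= B') -> (forall y, 0 < y < a -> V y <= B) ->
  Lap V (t + s) <= B' + exp (- t * a') * B + exp (- s * a) * Lap V t.
Proof.
  intros Ht Hs Ha' Haa HB' HVB' HVB. apply Lap_le; [lra|]. intros x k Hp.
  rewrite lsum_wsum. eapply Rle_trans.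
  { apply (wsum_le_split V hV _ (fun y => below a y * exp (- (t + s) * y))
                                (fun y => exp (- s * a) * exp (- t * y))); auto.
    intros y Hy. pose proof (exp_pos (- s * a)). pose proof (exp_pos (- t * y)).
    destruct (Rlt_dec y a) as [Hlt|Hge].
    - rewrite below_lt by auto. nra.
    - rewrite below_ge by lra. rewrite <- exp_plus, Rmult_0_l, Rplus_0_l.
      apply exp_le; nra. }
  pose proof (wsum_head_le V hV (t + s) a' a B' B x k Hp ltac:(lra) Ha' Haa HB' HVB' HVB).
  rewrite wsum_scale, <- lsum_wsum.
  pose proof (Lap_ge_lsum t x k Ht Hp). pose proof (exp_pos (- s * a)).
  assert (exp (- (t + s) * a') * B <= exp (- t * a') * B).
  { apply Rmult_le_compat_r; [| apply exp_le; nra].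
    pose proof (V_nonneg V hV (a' / 2)). pose proof (HVB (a' / 2)). lra. }
  nra.
Qed.

Lemma Lap_le_tau t tau (m : nat) a' a B' B :
  0 <= t -> (1 <= m)%nat -> t <= INR m * (t - tau) ->
  0 < a' -> a' <= a -> 0 <= B' ->
  (forall y, 0 < y < a' -> V y <= B') -> (forall y, 0 < y < a -> V y <= B) ->
  (forall y, a <= y -> V y <= exp (tau * y)) ->
  Lap V t <= B' + exp (- t * a') * B + (INR m + 1) * exp (- (t - tau) * a).
Proof.
  intros Ht Hm Htm Ha' Haa HB' HVB' HVB HVe. apply Lap_le; auto. intros x k Hp.
  rewrite lsum_wsum. eapply Rle_trans.
  { apply (wsum_le_split V hV _ (fun y => below a y * exp (- t * y))
                                (fun y => (1 - below a y) * exp (- t * y))); auto.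
    intros y _; lra. }
  pose proof (wsum_head_le V hV t a' a B' B x k Hp Ht Ha' Haa HB' HVB' HVB).
  pose proof (wsum_tail_le V hV t tau m a x k Hp Ht Hm Htm HVe).
  lra.
Qed.
End Laplace.

(** * Mixing times and the scales lamV, tauV *)

Section Scales.
Variable V : R -> R.
Hypothesis hV : inV V.

Lemma Lap_small eps : 0 < eps -> exists t, 0 <= t /\ Lap V t <= eps.
Proof.
  intros He. destruct (V_small_near_0 V hV (eps / 2)) as [d [Hd HVd]]; [lra|].
  destruct (V_bounded V hV) as [l Hl].
  assert (Hl0 : 0 <= l) by (pose proof (V_nonneg V hV 1 Rlt_0_1); pose proof (Hl 1 Rlt_0_1); lra).
  set (u := ((eps / 2 + l) / (eps / 2)) / d).
  assert (Hu : 0 <= u).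
  { unfold u. repeat apply Rmult_le_pos; try lra; left; apply Rinv_0_lt_compat; lra. }
  exists (u + u). split; [lra|].
  assert (HV' : forall y, 0 < y < d -> V y <= eps / 2) by (intros y Hy; left; apply HVd; auto).
  pose proof (Lap_shift_le V hV u u d d (eps / 2) (eps / 2) Hu Hu Hd (Rle_refl _) ltac:(lra) HV' HV').
  pose proof (Lap_le_of_V_le V hV l Hl u Hu).
  assert ((eps / 2 + l) * exp (- (u * d)) < eps / 2).
  { apply mul_exp_neg_lt; try lra. unfold u. right. field. lra. }
  replace (- u * d) with (- (u * d)) in * by ring.
  pose proof (exp_pos (- (u * d))). nra.
Qed.

Lemma Tmix_spec eps : 0 < eps ->
  0 <= Tmix V eps /\ Lap V (Tmix V eps) <= eps /\
  forall s, 0 <= s -> Lap V s <= eps -> Tmix V eps <= s.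
Proof.
  intros He. unfold Tmix. apply epsilon_spec.
  destruct (glb_exists (fun t => 0 <= t /\ Lap V t <= eps)) as [ts [Hlow Hgreat]].
  - apply Lap_small; auto.
  - intros x [Hx _]; auto.
  - assert (H0 : 0 <= ts) by (apply Hgreat; intros x [Hx _]; auto).
    exists ts. split; [auto | split; [| intros s Hs HL; apply Hlow; auto]].
    apply Lap_le_of_forall_gt; auto; [lra|]. intros s Hs.
    apply NNPP; intro HL.
    enough (s <= ts) by lra.
    apply Hgreat. intros y [Hy HLy]. apply Rnot_lt_le; intro Hys.
    apply HL, Rle_trans with (Lap V y); auto. apply (Lap_anti V hV); lra.
Qed.

Lemma Tmix_nonneg eps : 0 < eps -> 0 <= Tmix V eps.
Proof. intros He; apply (Tmix_spec eps He). Qed.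

Lemma Tmix_le eps s : 0 < eps -> 0 <= s -> Lap V s <= eps -> Tmix V eps <= s.
Proof. intros He; apply (Tmix_spec eps He). Qed.

Lemma Tmix_gt eps s : 0 < eps -> 0 <= s -> eps < Lap V s -> s < Tmix V eps.
Proof.
  intros He Hs HL. destruct (Tmix_spec eps He) as [H0 [H1 _]].
  apply Rnot_le_lt; intro H. pose proof (Lap_anti V hV (Tmix V eps) s H0 H). lra.
Qed.

Lemma Tmix_anti eps delta : 0 < eps -> eps <= delta -> Tmix V delta <= Tmix V eps.
Proof.
  intros He Hed. destruct (Tmix_spec eps He) as [H0 [H1 _]]. apply Tmix_le; auto; lra.
Qed.

Lemma exceeds_le c c' : c' <= c -> exceeds V c -> exceeds V c'.
Proof. intros H [y [Hy Hc]]. exists y; split; auto; lra. Qed.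

Lemma lam_glb c : exceeds V c -> is_glb (fun l => 0 < l /\ V l > c) (lamV V c).
Proof.
  intros Hexc. unfold lamV. apply epsilon_spec, glb_exists.
  - destruct Hexc as [y Hy]; exists y; lra.
  - intros x [Hx _]; lra.
Qed.

Lemma lam_pos c : 0 < c -> exceeds V c -> 0 < lamV V c.
Proof.
  intros Hc Hexc. destruct (V_small_near_0 V hV c Hc) as [d [Hd HVd]].
  apply Rlt_le_trans with d; auto. apply (proj2 (lam_glb c Hexc)).
  intros x [Hx1 Hx2]. apply Rnot_lt_le; intro H. specialize (HVd x (conj Hx1 H)). lra.
Qed.

Lemma V_le_below_lam c : exceeds V c -> forall y, 0 < y < lamV V c -> V y <= c.
Proof.
  intros Hexc y Hy. apply Rnot_lt_le; intro H.
  assert (lamV V c <= y) by (apply (proj1 (lam_glb c Hexc)); split; lra). lra.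
Qed.

Lemma V_lam_ge c : 0 < c -> exceeds V c -> c <= V (lamV V c).
Proof.
  intros Hc Hexc. pose proof (lam_pos c Hc Hexc) as Hl. set (L := lamV V c) in *.
  apply Rnot_lt_le; intro H.
  destruct (V_right_cont V hV L (c - V L) Hl ltac:(lra)) as [d [Hd Hrc]].
  enough (L + d <= L) by lra.
  apply (proj2 (lam_glb c Hexc)). intros y [Hy1 Hy2].
  apply Rnot_lt_le; intro Hlt.
  assert (L <= y) by (apply (proj1 (lam_glb c Hexc)); split; auto).
  specialize (Hrc y (conj H0 Hlt)). lra.
Qed.

Lemma lam_mono c c' : c' <= c -> exceeds V c -> lamV V c' <= lamV V c.
Proof.
  intros Hcc Hexc. apply (proj2 (lam_glb c Hexc)). intros y [H1 H2].
  apply (proj1 (lam_glb c' (exceeds_le c c' Hcc Hexc))). split; auto. lra.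
Qed.

Lemma tau_lub c : 0 < c -> exceeds V c ->
  is_lub (fun s => exists l, lamV V c <= l /\ 0 < l /\ s = ln (1 + V l) / l) (tauV V c).
Proof.
  intros Hc Hexc. unfold tauV. apply epsilon_spec.
  pose proof (lam_pos c Hc Hexc) as Hl.
  destruct (V_bounded V hV) as [L HL].
  destruct (completeness (fun s => exists l, lamV V c <= l /\ 0 < l /\ s = ln (1 + V l) / l))
    as [m Hm]; [| |exists m; exact Hm].
  - exists (ln (1 + L) / lamV V c). intros s [y [Hy1 [Hy2 ->]]].
    pose proof (V_nonneg V hV y Hy2). pose proof (HL y Hy2).
    assert (ln (1 + V y) <= ln (1 + L)) by (apply ln_le; lra).
    assert (0 <= ln (1 + V y)) by (rewrite <- ln_1; apply ln_le; lra).
    assert (/ y <= / lamV V c) by (apply Rinv_le_contravar; auto).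
    unfold Rdiv. apply Rmult_le_compat; auto. left; apply Rinv_0_lt_compat; auto.
  - exists (ln (1 + V (lamV V c)) / lamV V c), (lamV V c). repeat split; auto; lra.
Qed.

Lemma tau_nonneg c : 0 < c -> exceeds V c -> 0 <= tauV V c.
Proof.
  intros Hc Hexc. pose proof (lam_pos c Hc Hexc) as Hl. pose proof (V_nonneg V hV _ Hl).
  apply Rle_trans with (ln (1 + V (lamV V c)) / lamV V c).
  - assert (0 <= ln (1 + V (lamV V c))) by (rewrite <- ln_1; apply ln_le; lra).
    unfold Rdiv; apply Rmult_le_pos; auto. left; apply Rinv_0_lt_compat; auto.
  - apply (proj1 (tau_lub c Hc Hexc)). exists (lamV V c). repeat split; auto; lra.
Qed.

Lemma V_le_exp_tau c : 0 < c -> exceeds V c ->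
  forall y, lamV V c <= y -> V y <= exp (tauV V c * y).
Proof.
  intros Hc Hexc y Hy. pose proof (lam_pos c Hc Hexc) as Hl.
  assert (Hy0 : 0 < y) by lra. pose proof (V_nonneg V hV y Hy0) as HVy.
  assert (Hq : ln (1 + V y) / y <= tauV V c)
    by (apply (proj1 (tau_lub c Hc Hexc)); exists y; repeat split; auto; lra).
  assert (Hln : ln (1 + V y) <= tauV V c * y).
  { apply Rmult_le_compat_r with (r := y) in Hq; [|lra]. unfold Rdiv in Hq.
    rewrite Rmult_assoc, Rinv_l in Hq; lra. }
  pose proof (exp_le _ _ Hln) as He. rewrite exp_ln in He by lra. lra.
Qed.

Lemma tau_approx c eta : 0 < c -> exceeds V c -> 0 < eta ->
  exists y, lamV V c <= y /\ 0 < y /\ exp ((tauV V c - eta) * y) - 1 <= V y.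
Proof.
  intros Hc Hexc He. pose proof (lam_pos c Hc Hexc) as Hl.
  apply NNPP; intro Hn.
  enough (tauV V c <= tauV V c - eta) by lra.
  apply (proj2 (tau_lub c Hc Hexc)). intros s [y [Hy1 [Hy2 ->]]].
  apply Rnot_lt_le; intro Hlt. apply Hn. exists y; repeat split; auto.
  assert (H : (tauV V c - eta) * y < ln (1 + V y)).
  { apply Rmult_lt_compat_r with (r := y) in Hlt; auto. unfold Rdiv in Hlt.
    rewrite Rmult_assoc, Rinv_l in Hlt; lra. }
  pose proof (V_nonneg V hV y Hy2).
  pose proof (exp_le _ _ (Rlt_le _ _ H)) as Hexp. rewrite exp_ln in Hexp by lra. lra.
Qed.

Lemma tau_le_max c ct : 0 < c -> c <= ct -> exceeds V ct ->
  tauV V c <= Rmax (ln (1 + ct) / lamV V c) (tauV V ct).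
Proof.
  intros Hc Hcc Hexc. pose proof (exceeds_le ct c Hcc Hexc) as Hexc'.
  pose proof (lam_pos c Hc Hexc') as Hl.
  apply (proj2 (tau_lub c Hc Hexc')). intros s [y [Hy1 [Hy2 ->]]].
  destruct (Rle_dec (lamV V ct) y) as [Hge|Hlt].
  - apply Rle_trans with (tauV V ct); [|apply Rmax_r].
    apply (proj1 (tau_lub ct ltac:(lra) Hexc)). exists y; repeat split; auto.
  - apply Rle_trans with (ln (1 + ct) / lamV V c); [|apply Rmax_l].
    pose proof (V_le_below_lam ct Hexc y ltac:(lra)).
    pose proof (V_nonneg V hV y Hy2).
    assert (ln (1 + V y) <= ln (1 + ct)) by (apply ln_le; lra).
    assert (0 <= ln (1 + V y)) by (rewrite <- ln_1; apply ln_le; lra).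
    assert (/ y <= / lamV V c) by (apply Rinv_le_contravar; auto).
    unfold Rdiv. apply Rmult_le_compat; auto. left; apply Rinv_0_lt_compat; auto.
Qed.

Lemma Lap_ge_tau_gap c t eta : 0 < c -> exceeds V c -> 0 < eta -> 0 <= t ->
  t + eta <= tauV V c -> (tauV V c - eta - t) * lamV V c <= Lap V t.
Proof.
  intros Hc Hexc He Ht Hte. pose proof (lam_pos c Hc Hexc).
  destruct (tau_approx c eta Hc Hexc He) as [y [Hy [Hy0 HVy]]].
  pose proof (Lap_ge_point V hV t y Ht Hy0).
  assert (Hid : exp (- t * y) * (exp ((tauV V c - eta) * y) - 1)
                = exp ((tauV V c - eta - t) * y) - exp (- t * y)).
  { rewrite Rmult_minus_distr_l, Rmult_1_r, <- exp_plus. f_equal; f_equal; ring. }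
  assert (exp (- t * y) * (exp ((tauV V c - eta) * y) - 1) <= exp (- t * y) * V y)
    by (apply Rmult_le_compat_l; [left; apply exp_pos | auto]).
  pose proof (exp_ineq1_le ((tauV V c - eta - t) * y)).
  pose proof (exp_le_1 (- t * y) ltac:(nra)).
  assert ((tauV V c - eta - t) * lamV V c <= (tauV V c - eta - t) * y)
    by (apply Rmult_le_compat_l; lra).
  lra.
Qed.

Lemma Lap_le_lam c' c t m : 0 < c' -> c' <= c -> exceeds V c -> 0 <= t -> (1 <= m)%nat ->
  t <= INR m * (t - tauV V c) ->
  Lap V t <= c' + exp (- t * lamV V c') * c + (INR m + 1) * exp (- (t - tauV V c) * lamV V c).
Proof.
  intros Hc' Hcc Hexc Ht Hm Htm. pose proof (exceeds_le c c' Hcc Hexc) as Hexc'.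
  apply Lap_le_tau; auto; try lra.
  - apply (lam_pos c' Hc' Hexc').
  - apply (lam_mono c c' Hcc Hexc).
  - apply (V_le_below_lam c' Hexc').
  - apply (V_le_below_lam c Hexc).
  - apply (V_le_exp_tau c ltac:(lra) Hexc).
Qed.

Lemma Lap_half_le c t : 0 < c -> exceeds V c -> 0 <= t -> tauV V c <= t / 4 ->
  Lap V (t / 2) <= c + c * exp (- (t * lamV V c / 2)) + 3 * exp (- (t * lamV V c / 4)).
Proof.
  intros Hc Hexc Ht Htau. pose proof (lam_pos c Hc Hexc) as Hl.
  pose proof (Lap_le_lam c c (t / 2) 2 Hc (Rle_refl _) Hexc ltac:(lra) ltac:(lia)
                ltac:(simpl; lra)) as Hup.
  replace (INR 2 + 1) with 3 in Hup by (simpl; lra).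
  replace (- (t / 2) * lamV V c) with (- (t * lamV V c / 2)) in Hup by field.
  assert (exp (- (t / 2 - tauV V c) * lamV V c) <= exp (- (t * lamV V c / 4)))
    by (apply exp_le; nra).
  lra.
Qed.
End Scales.

Section Windows.
Variable V : R -> R.
Hypothesis hV : inV V.

Lemma Lap_above_tau_le a m c ct : 1 < a -> (1 <= m)%nat -> a <= INR m * (a - 1) ->
  0 < c -> c <= ct -> exceeds V ct ->
  Lap V (a * tauV V ct)
  <= c + ct * exp (- (tauV V ct * lamV V c))
     + (INR m + 1) * exp (- ((a - 1) * (tauV V ct * lamV V ct))).
Proof.
  intros Ha Hm Ham Hc Hcc Hexc.
  pose proof (tau_nonneg V hV ct ltac:(lra) Hexc) as Htau.
  pose proof (lam_pos V hV c Hc (exceeds_le V ct c Hcc Hexc)).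
  pose proof (Lap_le_lam V hV c ct (a * tauV V ct) m Hc Hcc Hexc ltac:(nra) Hm ltac:(nra)) as Hup.
  replace (- (a * tauV V ct - tauV V ct) * lamV V ct)
    with (- ((a - 1) * (tauV V ct * lamV V ct))) in Hup by ring.
  assert (exp (- (a * tauV V ct) * lamV V c) * ct <= ct * exp (- (tauV V ct * lamV V c))).
  { rewrite Rmult_comm. apply Rmult_le_compat_l; [lra | apply exp_le].
    assert (0 <= (a - 1) * tauV V ct) by (apply Rmult_le_pos; lra). nra. }
  lra.
Qed.

Lemma Tmix_le_add eps delta c' c : 0 < eps -> eps <= delta -> 0 < c' -> c' <= c ->
  c' <= eps / 4 -> exceeds V c -> c / (eps / 4) <= Tmix V delta * lamV V c' ->
  Tmix V eps <= Tmix V delta + ln (2 * delta / eps) / lamV V c.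
Proof.
  intros He Hed Hc' Hcc Hce Hexc Hlarge.
  pose proof (exceeds_le V c c' Hcc Hexc) as Hexc'.
  pose proof (lam_pos V hV c ltac:(lra) Hexc) as Hl.
  destruct (Tmix_spec V hV delta ltac:(lra)) as [Hu0 [Hu1 _]].
  set (u := Tmix V delta) in *.
  assert (Hln : 0 <= ln (2 * delta / eps)).
  { rewrite <- ln_1. apply ln_le; [lra|]. apply Rmult_le_reg_r with eps; auto.
    unfold Rdiv. rewrite Rmult_assoc, Rinv_l; lra. }
  set (s := ln (2 * delta / eps) / lamV V c).
  assert (Hs : 0 <= s) by (apply Rmult_le_pos; auto; left; apply Rinv_0_lt_compat; auto).
  pose proof (Lap_shift_le V hV u s (lamV V c') (lamV V c) c' c Hu0 Hs
                (lam_pos V hV c' Hc' Hexc') (lam_mono V c c' Hcc Hexc) ltac:(lra)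
                (V_le_below_lam V c' Hexc') (V_le_below_lam V c Hexc)) as HK.
  assert (Hes : exp (- s * lamV V c) = eps / (2 * delta)).
  { replace (- s * lamV V c) with (- ln (2 * delta / eps)) by (unfold s; field; lra).
    rewrite exp_Ropp, exp_ln; [field; lra | apply Rdiv_lt_0_compat; lra]. }
  assert (exp (- u * lamV V c') * c < eps / 4).
  { rewrite Rmult_comm. replace (- u * lamV V c') with (- (u * lamV V c')) by ring.
    apply mul_exp_neg_lt; lra. }
  assert (exp (- s * lamV V c) * Lap V u <= eps / 2).
  { rewrite Hes. apply Rle_trans with (eps / (2 * delta) * delta).
    - apply Rmult_le_compat_l; auto. apply Rlt_le, Rdiv_lt_0_compat; lra.
    - right; field; lra. }
  apply Tmix_le; auto; lra.
Qed.

Lemma Tmix_le_tau_add eps c' c : 0 < eps -> 0 < c' -> c' <= c -> c' <= eps / 4 -> exceeds V c ->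
  c / (eps / 4) <= tauV V c * lamV V c' -> 24 / eps <= sqrt (tauV V c * lamV V c) ->
  Tmix V eps <= tauV V c + sqrt (tauV V c / lamV V c).
Proof.
  intros He Hc' Hcc Hce Hexc Hlarge Hx.
  pose proof (exceeds_le V c c' Hcc Hexc) as Hexc'.
  pose proof (lam_pos V hV c ltac:(lra) Hexc) as Hl.
  pose proof (lam_pos V hV c' Hc' Hexc') as Hl'.
  pose proof (tau_nonneg V hV c ltac:(lra) Hexc) as Htau.
  destruct (sqrt_div_mul (tauV V c) (lamV V c) Htau Hl) as [Hsl Hts].
  set (tau := tauV V c) in *. set (lam := lamV V c) in *.
  set (s := sqrt (tau / lam)) in *. set (x := sqrt (tau * lam)) in *.
  assert (Hs0 : 0 <= s) by apply sqrt_pos.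
  assert (Hx0 : 0 <= 24 / eps) by (apply Rlt_le, Rdiv_lt_0_compat; lra).
  destruct (nat_between (x + 1)) as [m [Hm1 [Hm2 Hm3]]]; [lra|].
  assert (Hcond : tau + s <= INR m * (tau + s - tau)).
  { replace (tau + s - tau) with s by ring. rewrite Hts. nra. }
  pose proof (Lap_le_lam V hV c' c (tau + s) m Hc' Hcc Hexc ltac:(lra) Hm1 Hcond) as Hup.
  fold tau lam in Hup.
  assert (exp (- (tau + s) * lamV V c') * c < eps / 4).
  { apply Rle_lt_trans with (c * exp (- (tau * lamV V c'))).
    - rewrite Rmult_comm. apply Rmult_le_compat_l; [lra | apply exp_le; nra].
    - apply mul_exp_neg_lt; lra. }
  assert ((INR m + 1) * exp (- (tau + s - tau) * lam) < eps / 4).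
  { replace (- (tau + s - tau) * lam) with (- x) by lra.
    apply Rle_lt_trans with ((x + 3) * exp (- x)).
    - apply Rmult_le_compat_r; [left; apply exp_pos | lra].
    - apply lin_mul_exp_neg_lt; try lra. replace (6 / (eps / 4)) with (24 / eps) by (field; lra). lra. }
  apply Tmix_le; auto; lra.
Qed.

Lemma tau_sub_lt_Tmix eps c : 0 < eps -> 0 < c -> exceeds V c ->
  2 * eps + 1 <= sqrt (tauV V c * lamV V c) ->
  tauV V c - sqrt (tauV V c / lamV V c) < Tmix V eps.
Proof.
  intros He Hc Hexc Hx.
  pose proof (lam_pos V hV c Hc Hexc) as Hl.
  pose proof (tau_nonneg V hV c Hc Hexc) as Htau.
  destruct (sqrt_div_mul (tauV V c) (lamV V c) Htau Hl) as [Hsl Hts].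
  set (tau := tauV V c) in *. set (lam := lamV V c) in *.
  set (s := sqrt (tau / lam)) in *. set (x := sqrt (tau * lam)) in *.
  assert (Hs : 0 < s).
  { destruct (sqrt_pos (tau / lam)) as [Hp|Hz]; auto. fold s in Hz. rewrite <- Hz in Hsl. lra. }
  assert (Hts0 : 0 <= tau - s) by (rewrite Hts; nra).
  pose proof (Lap_ge_tau_gap V hV c (tau - s) (s / 2) Hc Hexc ltac:(lra) Hts0
                 ltac:(change (tauV V c) with tau; lra)) as Hlow.
  change (tauV V c) with tau in Hlow. change (lamV V c) with lam in Hlow.
  apply Tmix_gt; auto. nra.
Qed.
End Windows.

(** * Sequences *)

Definition eventually (P : nat -> Prop) : Prop := exists N, forall n, (N <= n)%nat -> P n.

Lemma eventually_and P Q : eventually P -> eventually Q -> eventually (fun n => P n /\ Q n).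
Proof.
  intros [N1 H1] [N2 H2]. exists (N1 + N2)%nat. intros n Hn. split; [apply H1 | apply H2]; lia.
Qed.

Lemma eventually_mono (P Q : nat -> Prop) : eventually P -> (forall n, P n -> Q n) -> eventually Q.
Proof. intros [N H] HPQ. exists N; auto. Qed.

Lemma cv_infty_eventually u : cv_infty u <-> forall M, eventually (fun n => M < u n).
Proof. split; intros H M; destruct (H M) as [N HN]; exists N; auto. Qed.

Lemma Un_cv0_eventually_lt u : Un_cv u 0 -> forall d, 0 < d -> eventually (fun n => u n < d).
Proof.
  intros H d Hd. destruct (H d Hd) as [N HN]. exists N. intros n Hn.
  specialize (HN n Hn). unfold Rdist in HN. apply Rabs_def2 in HN. lra.
Qed.

Lemma Un_cv0_of_eventually u :
  (forall d, 0 < d -> eventually (fun n => 0 <= u n /\ u n < d)) -> Un_cv u 0.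
Proof.
  intros H d Hd. destruct (H d Hd) as [N HN]. exists N. intros n Hn.
  destruct (HN n Hn) as [H1 H2]. unfold Rdist. rewrite Rminus_0_r, Rabs_right; lra.
Qed.

Lemma bigO_of_eventually a b C :
  eventually (fun n => Rabs (a n) <= C * b n) -> bigO a b.
Proof. intros [N HN]. exists C, N. exact HN. Qed.

Section Sequence.
Variable V : nat -> R -> R.
Hypothesis hV : forall n, inV (V n).
Hypothesis h0 : cv_infty (fun n => Lap (V n) 0).

Lemma eventually_exceeds c : eventually (fun n => exceeds (V n) c).
Proof.
  destruct (h0 c) as [N HN]. exists N. intros n Hn. apply exceeds_of_lt_Lap0; auto.
Qed.

Definition tau_lam_infty (ct : R) : Prop :=
  forall c, 0 < c -> cv_infty (fun n => tauV (V n) ct * lamV (V n) c).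

Lemma cutoff_lam_infty t : is_cutoff_time V t ->
  forall c, 0 < c -> cv_infty (fun n => t n * lamV (V n) c).
Proof.
  intros [Ht [Habove _]] c Hc. apply cv_infty_eventually. intros M. set (M' := Rmax M 0).
  assert (M <= M' /\ 0 <= M') by (split; [apply Rmax_l | apply Rmax_r]).
  pose proof (Un_cv0_eventually_lt _ (Habove 2 ltac:(lra)) (c * exp (- (2 * M')))
                (Rmult_lt_0_compat _ _ Hc (exp_pos _))) as E.
  eapply eventually_mono; [apply (eventually_and _ _ E (eventually_and _ _ Ht (eventually_exceeds c)))|].
  intros n [Hsmall [Htn Hexc]].
  pose proof (lam_pos _ (hV n) c Hc Hexc) as Hl.
  pose proof (V_lam_ge _ (hV n) c Hc Hexc).
  pose proof (Lap_ge_point _ (hV n) (2 * t n) (lamV (V n) c) ltac:(lra) Hl).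
  assert (exp (- (2 * t n) * lamV (V n) c) * c <= exp (- (2 * t n) * lamV (V n) c) * V n (lamV (V n) c))
    by (apply Rmult_le_compat_l; auto; left; apply exp_pos).
  assert (Hlt : exp (- (2 * t n) * lamV (V n) c) < exp (- (2 * M'))).
  { apply Rmult_lt_reg_r with c; auto. lra. }
  apply exp_lt_inv in Hlt. lra.
Qed.

Lemma cutoff_Tmix_lam_infty t : is_cutoff_time V t -> forall eps c, 0 < eps -> 0 < c ->
  cv_infty (fun n => Tmix (V n) eps * lamV (V n) c).
Proof.
  intros Hcut eps c He Hc. pose proof (cutoff_lam_infty t Hcut c Hc) as Htl.
  destruct Hcut as [Ht [_ Hbelow]].
  apply cv_infty_eventually. intros M.
  pose proof (proj1 (cv_infty_eventually _) (Hbelow (1 / 2) ltac:(lra)) eps) as E1.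
  pose proof (proj1 (cv_infty_eventually _) Htl (2 * M)) as E2.
  eapply eventually_mono;
    [apply (eventually_and _ _ E1 (eventually_and _ _ E2 (eventually_and _ _ Ht (eventually_exceeds c))))|].
  intros n [H1 [H2 [H3 Hexc]]].
  pose proof (lam_pos _ (hV n) c Hc Hexc) as Hl.
  pose proof (Tmix_gt _ (hV n) eps (1 / 2 * t n) He ltac:(lra) H1).
  assert (1 / 2 * t n * lamV (V n) c <= Tmix (V n) eps * lamV (V n) c)
    by (apply Rmult_le_compat_r; lra).
  lra.
Qed.

Lemma cutoff_tau_lam_infty t : is_cutoff_time V t -> forall c, 0 < c ->
  cv_infty (fun n => tauV (V n) c * lamV (V n) c).
Proof.
  intros Hcut c Hc. pose proof (cutoff_lam_infty t Hcut c Hc) as Htl.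
  destruct Hcut as [Ht [_ Hbelow]].
  apply cv_infty_eventually. intros M.
  pose proof (proj1 (cv_infty_eventually _) (Hbelow (1 / 2) ltac:(lra)) (2 * c + 3)) as E1.
  pose proof (proj1 (cv_infty_eventually _) Htl (4 * M)) as E2.
  eapply eventually_mono;
    [apply (eventually_and _ _ E1 (eventually_and _ _ E2 (eventually_and _ _ Ht (eventually_exceeds c))))|].
  intros n [H1 [H2 [H3 Hexc]]].
  pose proof (lam_pos _ (hV n) c Hc Hexc) as Hl.
  assert (Htau : t n / 4 < tauV (V n) c).
  { apply Rnot_le_lt; intro Hle.
    pose proof (Lap_half_le _ (hV n) c (t n) Hc Hexc ltac:(lra) Hle).
    pose proof (exp_le_1 (- (t n * lamV (V n) c / 2)) ltac:(nra)).
    pose proof (exp_le_1 (- (t n * lamV (V n) c / 4)) ltac:(nra)).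
    replace (1 / 2 * t n) with (t n / 2) in H1 by field. nra. }
  assert (t n / 4 * lamV (V n) c <= tauV (V n) c * lamV (V n) c)
    by (apply Rmult_le_compat_r; lra).
  lra.
Qed.

(* For c >= ct, lamV grows with the level; for c < ct, [tau_le_max] bounds
   tau(c) lambda(c) by tau(ct) lambda(c) or by ln (1 + ct). *)
Lemma tau_lam_infty_of_diag ct : 0 < ct ->
  (forall c, 0 < c -> c <= ct -> cv_infty (fun n => tauV (V n) c * lamV (V n) c)) ->
  tau_lam_infty ct.
Proof.
  intros Hct Hdiag c Hc. apply cv_infty_eventually. intros M.
  destruct (Rle_dec ct c) as [Hge|Hlt].
  - pose proof (proj1 (cv_infty_eventually _) (Hdiag ct Hct (Rle_refl _)) M) as E.
    eapply eventually_mono; [apply (eventually_and _ _ E (eventually_exceeds c))|].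
    intros n [H1 Hexc].
    pose proof (lam_mono (V n) c ct Hge Hexc).
    pose proof (tau_nonneg _ (hV n) ct Hct (exceeds_le (V n) c ct Hge Hexc)).
    assert (tauV (V n) ct * lamV (V n) ct <= tauV (V n) ct * lamV (V n) c)
      by (apply Rmult_le_compat_l; auto).
    lra.
  - pose proof (proj1 (cv_infty_eventually _) (Hdiag c Hc ltac:(lra)) (Rmax M (ln (1 + ct)))) as E.
    eapply eventually_mono; [apply (eventually_and _ _ E (eventually_exceeds ct))|].
    intros n [H1 Hexc].
    pose proof (lam_pos _ (hV n) c Hc (exceeds_le (V n) ct c ltac:(lra) Hexc)) as Hl.
    pose proof (tau_le_max _ (hV n) c ct Hc ltac:(lra) Hexc) as Hm.
    assert (M <= Rmax M (ln (1 + ct)) /\ ln (1 + ct) <= Rmax M (ln (1 + ct)))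
      by (split; [apply Rmax_l | apply Rmax_r]).
    apply Rnot_le_lt; intro Hle.
    revert Hm. unfold Rmax at 1.
    destruct (Rle_dec (ln (1 + ct) / lamV (V n) c) (tauV (V n) ct)); intro Hm.
    + assert (tauV (V n) c * lamV (V n) c <= tauV (V n) ct * lamV (V n) c)
        by (apply Rmult_le_compat_r; lra).
      lra.
    + assert (tauV (V n) c * lamV (V n) c <= ln (1 + ct) / lamV (V n) c * lamV (V n) c)
        by (apply Rmult_le_compat_r; lra).
      replace (ln (1 + ct) / lamV (V n) c * lamV (V n) c) with (ln (1 + ct)) in * by (field; lra).
      lra.
Qed.

Lemma tau_lam_infty_of_Tmix eps : 0 < eps ->
  (forall c, 0 < c -> cv_infty (fun n => Tmix (V n) eps * lamV (V n) c)) ->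
  forall c, 0 < c -> c < eps -> cv_infty (fun n => tauV (V n) c * lamV (V n) c).
Proof.
  intros He HT c Hc Hce. apply cv_infty_eventually. intros M. set (M' := Rmax M 0).
  assert (M <= M' /\ 0 <= M') by (split; [apply Rmax_l | apply Rmax_r]).
  set (g := (eps - c) / 2). assert (Hg : 0 < g) by (unfold g; lra).
  assert (0 <= c / g /\ 0 <= 12 / g) as [Hcg H12g]
    by (split; apply Rmult_le_pos; try lra; left; apply Rinv_0_lt_compat; lra).
  pose proof (proj1 (cv_infty_eventually _) (HT c Hc) (2 * (c / g) + 12 / g + 4 * M' + 1)) as E.
  eapply eventually_mono; [apply (eventually_and _ _ E (eventually_exceeds c))|].
  intros n [H1 Hexc].
  pose proof (lam_pos _ (hV n) c Hc Hexc) as Hl.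
  pose proof (Tmix_nonneg _ (hV n) eps He) as HT0.
  set (T := Tmix (V n) eps) in *. set (lam := lamV (V n) c) in *.
  assert (HTp : 0 < T) by (destruct HT0 as [Hp|Hz]; auto; rewrite <- Hz in H1; lra).
  assert (HL : eps < Lap (V n) (T / 2)).
  { apply Rnot_le_lt; intro Hle. pose proof (Tmix_le _ (hV n) eps (T / 2) He ltac:(lra) Hle).
    fold T in H0. lra. }
  assert (Htau : T / 4 < tauV (V n) c).
  { apply Rnot_le_lt; intro Hle.
    pose proof (Lap_half_le _ (hV n) c T Hc Hexc ltac:(lra) Hle) as Hup. fold lam in Hup.
    assert (c * exp (- (T * lam / 2)) < g) by (apply mul_exp_neg_lt; lra).
    assert (3 * exp (- (T * lam / 4)) < g) by (apply mul_exp_neg_lt; lra).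
    unfold g in *. lra. }
  assert (T / 4 * lam <= tauV (V n) c * lam) by (apply Rmult_le_compat_r; lra).
  lra.
Qed.

Lemma tau_eventually_pos ct : 0 < ct -> tau_lam_infty ct ->
  eventually (fun n => 0 < tauV (V n) ct).
Proof.
  intros Hct Hinf.
  pose proof (proj1 (cv_infty_eventually _) (Hinf ct Hct) 0) as E.
  eapply eventually_mono; [apply (eventually_and _ _ E (eventually_exceeds ct))|].
  intros n [H1 Hexc].
  pose proof (tau_nonneg _ (hV n) ct Hct Hexc) as [Hp|Hz]; auto.
  rewrite <- Hz in H1. lra.
Qed.

Lemma Lap_above_tau_cv0 ct a : 0 < ct -> tau_lam_infty ct -> 1 < a ->
  Un_cv (fun n => Lap (V n) (a * tauV (V n) ct)) 0.
Proof.
  intros Hct Hinf Ha. apply Un_cv0_of_eventually. intros d Hd.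
  set (c := Rmin (d / 4) ct).
  assert (0 < c /\ c <= d / 4 /\ c <= ct) as [Hc [Hcd Hcc]]
    by (repeat split; [apply Rmin_pos; lra | apply Rmin_l | apply Rmin_r]).
  destruct (nat_between (a / (a - 1))) as [m [Hm1 [Hm2 Hm3]]].
  { apply Rlt_le, Rdiv_lt_0_compat; lra. }
  assert (Ham : a <= INR m * (a - 1)).
  { replace a with (a / (a - 1) * (a - 1)) at 1 by (field; lra). apply Rmult_le_compat_r; lra. }
  pose proof (proj1 (cv_infty_eventually _) (Hinf c Hc) (ct / (d / 4))) as E1.
  pose proof (proj1 (cv_infty_eventually _) (Hinf ct Hct) ((INR m + 1) / (d / 4) / (a - 1))) as E2.
  eapply eventually_mono; [apply (eventually_and _ _ E1 (eventually_and _ _ E2 (eventually_exceeds ct)))|].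
  intros n [H1 [H2 Hexc]].
  pose proof (tau_nonneg _ (hV n) ct Hct Hexc).
  split; [apply Lap_nonneg; auto; nra|].
  pose proof (Lap_above_tau_le _ (hV n) a m c ct Ha Hm1 Ham Hc Hcc Hexc).
  assert (ct * exp (- (tauV (V n) ct * lamV (V n) c)) < d / 4)
    by (apply mul_exp_neg_lt; lra).
  assert ((INR m + 1) * exp (- ((a - 1) * (tauV (V n) ct * lamV (V n) ct))) < d / 4).
  { apply mul_exp_neg_lt; [pose proof (pos_INR m); lra | lra |].
    apply Rmult_lt_compat_l with (r := a - 1) in H2; [|lra].
    replace ((a - 1) * ((INR m + 1) / (d / 4) / (a - 1))) with ((INR m + 1) / (d / 4)) in H2
      by (field; lra).
    lra. }
  lra.
Qed.

Lemma Lap_below_tau_infty ct a : 0 < ct -> tau_lam_infty ct -> 0 < a < 1 ->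
  cv_infty (fun n => Lap (V n) (a * tauV (V n) ct)).
Proof.
  intros Hct Hinf Ha. apply cv_infty_eventually. intros M.
  pose proof (proj1 (cv_infty_eventually _) (Hinf ct Hct) (2 * M / (1 - a))) as E.
  eapply eventually_mono;
    [apply (eventually_and _ _ E (eventually_and _ _ (tau_eventually_pos ct Hct Hinf)
                                                     (eventually_exceeds ct)))|].
  intros n [H1 [Htau Hexc]].
  set (tau := tauV (V n) ct) in *.
  pose proof (Lap_ge_tau_gap _ (hV n) ct (a * tau) ((1 - a) * tau / 2) Hct Hexc
                ltac:(nra) ltac:(nra) ltac:(change (tauV (V n) ct) with tau; nra)) as Hlow.
  change (tauV (V n) ct) with tau in Hlow.
  replace (tau - (1 - a) * tau / 2 - a * tau) with ((1 - a) / 2 * tau) in Hlow by field.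
  apply Rmult_lt_compat_l with (r := (1 - a) / 2) in H1; [|lra].
  replace ((1 - a) / 2 * (2 * M / (1 - a))) with M in H1 by (field; lra).
  lra.
Qed.

Lemma tau_cutoff_time ct : 0 < ct -> tau_lam_infty ct -> is_cutoff_time V (fun n => tauV (V n) ct).
Proof.
  intros Hct Hinf. split; [|split]; intros.
  - apply tau_eventually_pos; auto.
  - apply Lap_above_tau_cv0; auto.
  - apply Lap_below_tau_infty; auto.
Qed.
End Sequence.

Lemma le_sqrt_of_sqr_le K y : 0 <= K -> K * K <= y -> K <= sqrt y.
Proof. intros HK H. rewrite <- (sqrt_square K HK). apply sqrt_le_1_alt; auto. Qed.

Section Asymptotics.
Variable V : nat -> R -> R.
Hypothesis hV : forall n, inV (V n).
Hypothesis h0 : cv_infty (fun n => Lap (V n) 0).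

Lemma Tmix_window eps delta c : 0 < eps -> eps <= delta -> 0 < c ->
  (forall e c', 0 < e -> 0 < c' -> cv_infty (fun n => Tmix (V n) e * lamV (V n) c')) ->
  eventually (fun n => Rabs (Tmix (V n) eps - Tmix (V n) delta)
                       <= ln (2 * delta / eps) * (1 / lamV (V n) c)).
Proof.
  intros He Hed Hc HTl.
  set (c' := Rmin (eps / 4) c).
  assert (0 < c' /\ c' <= eps / 4 /\ c' <= c) as [Hc' [Hce Hcc]]
    by (repeat split; [apply Rmin_pos; lra | apply Rmin_l | apply Rmin_r]).
  pose proof (proj1 (cv_infty_eventually _) (HTl delta c' ltac:(lra) Hc') (c / (eps / 4))) as E.
  eapply eventually_mono; [apply (eventually_and _ _ E (eventually_exceeds V hV h0 c))|].
  intros n [H1 Hexc].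
  pose proof (Tmix_le_add _ (hV n) eps delta c' c He Hed Hc' Hcc Hce Hexc ltac:(lra)).
  pose proof (Tmix_anti _ (hV n) eps delta He Hed).
  rewrite Rabs_right by lra. unfold Rdiv in *. lra.
Qed.

Lemma Tmix_diff_bigO eps delta c : 0 < eps -> 0 < delta -> 0 < c ->
  (forall e c', 0 < e -> 0 < c' -> cv_infty (fun n => Tmix (V n) e * lamV (V n) c')) ->
  bigO (fun n => Tmix (V n) eps - Tmix (V n) delta) (fun n => 1 / lamV (V n) c).
Proof.
  intros He Hd Hc HTl. destruct (Rle_dec eps delta) as [Hed|Hde].
  - exact (bigO_of_eventually _ _ _ (Tmix_window eps delta c He Hed Hc HTl)).
  - apply (bigO_of_eventually _ _ (ln (2 * eps / delta))).
    eapply eventually_mono; [apply (Tmix_window delta eps c Hd ltac:(lra) Hc HTl)|].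
    intros n Hn. rewrite Rabs_minus_sym. exact Hn.
Qed.

Lemma Tmix_tau_bigO eps c : 0 < eps -> 0 < c -> tau_lam_infty V c ->
  bigO (fun n => Tmix (V n) eps - tauV (V n) c) (fun n => sqrt (tauV (V n) c / lamV (V n) c)).
Proof.
  intros He Hc Hinf. apply (bigO_of_eventually _ _ 1).
  set (c' := Rmin (eps / 4) c).
  assert (0 < c' /\ c' <= eps / 4 /\ c' <= c) as [Hc' [Hce Hcc]]
    by (repeat split; [apply Rmin_pos; lra | apply Rmin_l | apply Rmin_r]).
  set (K := 24 / eps + 2 * eps + 1).
  assert (HK : 0 <= 24 / eps) by (apply Rlt_le, Rdiv_lt_0_compat; lra).
  pose proof (proj1 (cv_infty_eventually _) (Hinf c Hc) (K * K)) as E1.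
  pose proof (proj1 (cv_infty_eventually _) (Hinf c' Hc') (c / (eps / 4))) as E2.
  eapply eventually_mono;
    [apply (eventually_and _ _ E1 (eventually_and _ _ E2 (eventually_exceeds V hV h0 c)))|].
  intros n [H1 [H2 Hexc]].
  assert (HKx : K <= sqrt (tauV (V n) c * lamV (V n) c))
    by (apply le_sqrt_of_sqr_le; unfold K in *; lra).
  pose proof (Tmix_le_tau_add _ (hV n) eps c' c He Hc' Hcc Hce Hexc ltac:(lra) ltac:(unfold K in *; lra)).
  pose proof (tau_sub_lt_Tmix _ (hV n) eps c He Hc Hexc ltac:(unfold K in *; lra)).
  apply Rabs_le. lra.
Qed.
End Asymptotics.

Theorem theorem2p2 (V : nat -> R -> R)
  (hV : forall n, inV (V n))
  (h0 : cv_infty (fun n => Lap (V n) 0)) :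
  let P1 := has_cutoff V in
  let P2 := forall eps c, 0 < eps -> 0 < c ->
              cv_infty (fun n => Tmix (V n) eps * lamV (V n) c) in
  let P3 := exists eps, 0 < eps /\ forall c, 0 < c ->
              cv_infty (fun n => Tmix (V n) eps * lamV (V n) c) in
  let P4 := forall c, 0 < c ->
              cv_infty (fun n => tauV (V n) c * lamV (V n) c) in
  let P5 := forall ct c, 0 < ct -> 0 < c ->
              cv_infty (fun n => tauV (V n) ct * lamV (V n) c) in
  let P6 := exists ct, 0 < ct /\ forall c, 0 < c ->
              cv_infty (fun n => tauV (V n) ct * lamV (V n) c) in
  (P1 <-> P2) /\ (P1 <-> P3) /\ (P1 <-> P4) /\ (P1 <-> P5) /\ (P1 <-> P6) /\
  (P1 ->
     (forall c, 0 < c -> is_cutoff_time V (fun n => tauV (V n) c)) /\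
     (forall eps delta c, 0 < eps -> 0 < delta -> 0 < c ->
        bigO (fun n => Tmix (V n) eps - Tmix (V n) delta)
             (fun n => 1 / lamV (V n) c)) /\
     (forall eps c, 0 < eps -> 0 < c ->
        bigO (fun n => Tmix (V n) eps - tauV (V n) c)
             (fun n => sqrt (tauV (V n) c / lamV (V n) c)))).
Proof.
  intros P1 P2 P3 P4 P5 P6.
  assert (H12 : P1 -> P2) by (intros [t Ht]; exact (cutoff_Tmix_lam_infty V hV h0 t Ht)).
  assert (H23 : P2 -> P3) by (intros H2; exists 1; split; [lra | intros c Hc; apply H2; lra]).
  assert (H31 : P3 -> P1).
  { intros [eps [He H3]]. exists (fun n => tauV (V n) (eps / 2)).
    apply (tau_cutoff_time V hV h0); [lra|].
    apply (tau_lam_infty_of_diag V hV h0); [lra|].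
    intros c Hc Hce. apply (tau_lam_infty_of_Tmix V hV h0 eps); auto; lra. }
  assert (H14 : P1 -> P4) by (intros [t Ht]; exact (cutoff_tau_lam_infty V hV h0 t Ht)).
  assert (H45 : P4 -> P5)
    by (intros H4 ct c Hct Hc; apply (tau_lam_infty_of_diag V hV h0 ct Hct); auto).
  assert (H56 : P5 -> P6) by (intros H5; exists 1; split; [lra | intros c Hc; apply H5; lra]).
  assert (H61 : P6 -> P1)
    by (intros [ct [Hct H6]]; exists (fun n => tauV (V n) ct); apply (tau_cutoff_time V hV h0); auto).
  do 5 (split; [tauto|]). intros H1. split; [|split].
  - intros c Hc. apply (tau_cutoff_time V hV h0); auto.
    intros c' Hc'. exact (H45 (H14 H1) c c' Hc Hc').
  - intros eps delta c He Hd Hc. apply (Tmix_diff_bigO V hV h0); auto. exact (H12 H1).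
  - intros eps c He Hc. apply (Tmix_tau_bigO V hV h0); auto.
    intros c' Hc'. exact (H45 (H14 H1) c c' Hc Hc').
Qed.
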